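(* Let $\gamma,\beta,\mu>0$ and, for $t\ge0$, $k\in\mathbb{R}^3$ with $\lambda_+(k)\neq\lambda_-(k)$, let $\mathcal N(t,k)$ be the $7\times7$ matrix \begin{equation*} \mathcal{N}=\begin{pmatrix} \frac{\lambda_+e^{\lambda_- t}-\lambda_-e^{\lambda_+ t}}{\lambda_+-\lambda_-} & -i\gamma{k}^T \frac{e^{\lambda_+ t}-e^{\lambda_- t}}{\lambda_+-\lambda_-} & 0 \\[2mm] -i\gamma k\frac{e^{\lambda_+ t}-e^{\lambda_- t}}{\lambda_+-\lambda_-} & \frac{\lambda_+e^{\lambda_+ t}-\lambda_-e^{\lambda_- t}}{\lambda_+-\lambda_-}\mathbf{I}_3 & -\beta\frac{e^{\lambda_+ t}-e^{\lambda_- t}}{\lambda_+-\lambda_-}\mathbf{I}_3\\[2mm] 0 & \beta\frac{e^{\lambda_+ t}-e^{\lambda_- t}}{\lambda_+-\lambda_-}\mathbf{I}_3 & \frac{\lambda_+e^{\lambda_- t}-\lambda_-e^{\lambda_+ t}}{\lambda_+-\lambda_-}\mathbf{I}_3 \end{pmatrix},\quad \lambda_\pm=-\tfrac{1}{2}\mu |k|^2\pm \tfrac{1}{2} \sqrt{\mu^2 |k|^4-4(\gamma^2|k|^2+\beta^2)}. \end{equation*} Then there exist constants $0<\epsilon<L$ such that, with $\mathbb{D}_0=\{|k|\le\epsilon\}$, $\mathbb{D}_1=\{\epsilon\le|k|\le L\}$, $\mathbb{D}_\infty=\{|k|\ge L\}$, the following entrywise bounds hold for $t\ge0$ and $k$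 (where $\mathcal N$ is defined). Over $\mathbb{D}_0$, \begin{equation*} |\mathcal{N}| \lesssim \begin{pmatrix} 1 & |k|d_3^T & 0 \\ |k|d_3 & \mathbf{I}_3 &\mathbf{I}_3 \\ 0 & \mathbf{I}_3 & \mathbf{I}_3 \end{pmatrix} e^{-\frac{1}{2}\mu |k|^2 t}. \end{equation*} Over $\mathbb{D}_\infty$, \begin{equation*} |\mathcal{N}| \lesssim \begin{pmatrix} 1 & |k|^{-1}d_3^T & 0 \\ |k|^{-1}d_3 & |k|^{-2}\mathbf{I}_3 & |k|^{-2}\mathbf{I}_3 \\ 0 & |k|^{-2}\mathbf{I}_3 & \mathbf{I}_3 \end{pmatrix} e^{-O(1) t} + \begin{pmatrix} |k|^{-2} & |k|^{-1}d_3^T & 0 \\ |k|^{-1}d_3 & \mathbf{I}_3 & |k|^{-2}\mathbf{I}_3 \\ 0 & |k|^{-2}\mathbf{I}_3 & |k|^{-2}\mathbf{I}_3 \end{pmatrix} e^{-O(1) |k|^2 t}. \end{equation*} Over $\mathbb{D}_1$, \begin{equation*} |\mathcal{N}| \lesssim \begin{pmatrix} 1 & d_3^T & 0 \\ d_3 & \mathbf{I}_3 & \mathbf{I}_3 \\ 0 & \mathbf{I}_3 & \mathbf{I}_3 \end{pmatrix} e^{-O(1) t}. \end{equation*}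
   Context: $|\mathcal N|$ denotes the matrix whose entries are the absolute values of those of $\mathcal N$; the inequalities are entrywise up to a constant. $d_3=(1,1,1)^T$; $\mathbf I_3$ is the $3\times3$ identity. $O(1)$ denotes a generic strictly positive constant independent of $t,k$; $A\lesssim B$ means $A\le CB$ for a constant $C$ independent of $t,k$. *)

From Stdlib Require Import Reals Lra Lia.
From Coquelicot Require Import Coquelicot.
Open Scope R_scope.

Definition Cexp (z : C) : C :=
  (exp (fst z) * cos (snd z), exp (fst z) * sin (snd z)).

Definition Csqrt_real (D : R) : C :=
  if Rle_dec 0 D then (sqrt D, 0) else (0, sqrt (- D)).

(* vector k in R^3 represented by its coordinates k 0, k 1, k 2 *)
Definition norm2 (k : nat -> R) : R := k 0%nat ^ 2 + k 1%nat ^ 2 + k 2%nat ^ 2.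
Definition knorm (k : nat -> R) : R := sqrt (norm2 k).

Definition disc (gam bet mu : R) (k : nat -> R) : R :=
  mu ^ 2 * knorm k ^ 4 - 4 * (gam ^ 2 * knorm k ^ 2 + bet ^ 2).

Definition lam_p (gam bet mu : R) (k : nat -> R) : C :=
  Cplus (RtoC (- (1/2) * mu * knorm k ^ 2))
        (Cmult (RtoC (1/2)) (Csqrt_real (disc gam bet mu k))).
Definition lam_m (gam bet mu : R) (k : nat -> R) : C :=
  Cminus (RtoC (- (1/2) * mu * knorm k ^ 2))
         (Cmult (RtoC (1/2)) (Csqrt_real (disc gam bet mu k))).

(* block structure of the 7 indices: 0 | 1,2,3 | 4,5,6 *)
Definition blk (i : nat) : nat :=
  if Nat.eqb i 0 then 0%nat else if Nat.leb i 3 then 1%nat else 2%nat.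
Definition subi (i : nat) : nat :=
  if Nat.leb i 3 then (i - 1)%nat else (i - 4)%nat.

Section NMat.
Variables (gam bet mu t : R) (k : nat -> R).
Let lp := lam_p gam bet mu k.
Let lm := lam_m gam bet mu k.
Let ep := Cexp (Cmult lp (RtoC t)).
Let em := Cexp (Cmult lm (RtoC t)).
Let E1 : C := Cdiv (Cminus ep em) (Cminus lp lm).
Let Ea : C := Cdiv (Cminus (Cmult lp em) (Cmult lm ep)) (Cminus lp lm).
Let Eb : C := Cdiv (Cminus (Cmult lp ep) (Cmult lm em)) (Cminus lp lm).
Let dlt (a b : nat) : C := if Nat.eqb a b then RtoC 1 else RtoC 0.

Definition Nmat (i j : nat) : C :=
  match blk i, blk j with
  | 0%nat, 0%nat => Ea
  | 0%nat, 1%nat => Cmult (Cmult (Cmult (RtoC (- gam)) Ci) (RtoC (k (subi j)))) E1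
  | 1%nat, 0%nat => Cmult (Cmult (Cmult (RtoC (- gam)) Ci) (RtoC (k (subi i)))) E1
  | 1%nat, 1%nat => Cmult Eb (dlt (subi i) (subi j))
  | 1%nat, 2%nat => Cmult (Cmult (RtoC (- bet)) E1) (dlt (subi i) (subi j))
  | 2%nat, 1%nat => Cmult (Cmult (RtoC bet) E1) (dlt (subi i) (subi j))
  | 2%nat, 2%nat => Cmult Ea (dlt (subi i) (subi j))
  | _, _ => RtoC 0
  end.
End NMat.

(* Real 7x7 block pattern
     ( a00      a01 d3^T   0      )
     ( a10 d3   a11 I3     a12 I3 )
     ( 0        a21 I3     a22 I3 ) *)
Definition pat7 (a00 a01 a10 a11 a12 a21 a22 : R) (i j : nat) : R :=
  let d := if Nat.eqb (subi i) (subi j) then 1 else 0 in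
  match blk i, blk j with
  | 0%nat, 0%nat => a00
  | 0%nat, 1%nat => a01
  | 1%nat, 0%nat => a10
  | 1%nat, 1%nat => a11 * d
  | 1%nat, 2%nat => a12 * d
  | 2%nat, 1%nat => a21 * d
  | 2%nat, 2%nat => a22 * d
  | _, _ => 0
  end.

(* Every entry of N is a multiple of one of three scalar functions of the roots lam_p, lam_m
   of X^2 + mu|k|^2 X + (gam^2|k|^2 + bet^2):
   E1 = (e^{lam_p t} - e^{lam_m t}) / (lam_p - lam_m), Ea = e^{lam_p t} - lam_p E1 and
   Eb = e^{lam_m t} + lam_p E1.  So it suffices to bound E1, the real parts of the roots and
   |lam_p|.  For small |k| the roots are complex conjugate with real part -mu|k|^2/2 and
   imaginary part at least bet/2, whence |E1| <= (2/bet) e^{-mu|k|^2 t/2}.  On a compact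
   annulus both real parts are at most some -r < 0 and |E1| <= t e^{-r t} <= (2/r) e^{-r t/2}.
   For large |k| the roots are real, lam_p lies in [-2(gam^2+bet^2)/mu, -gam^2/mu],
   lam_m <= -mu|k|^2/2 and lam_p - lam_m >= mu|k|^2/2, which yields the two-rate bound. *)

From Pilot Require Import Defs.
From Stdlib Require Import Reals Lra Lia Psatz.
From Coquelicot Require Import Coquelicot.
Open Scope R_scope.

Definition eexp (z : C) (t : R) : C := Cexp (Cmult z (RtoC t)).

Definition E1 (lp lm : C) (t : R) : C :=
  Cdiv (Cminus (eexp lp t) (eexp lm t)) (Cminus lp lm).
Definition Ea (lp lm : C) (t : R) : C :=
  Cdiv (Cminus (Cmult lp (eexp lm t)) (Cmult lm (eexp lp t))) (Cminus lp lm).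
Definition Eb (lp lm : C) (t : R) : C :=
  Cdiv (Cminus (Cmult lp (eexp lp t)) (Cmult lm (eexp lm t))) (Cminus lp lm).

Lemma exp_le_compat x y : x <= y -> exp x <= exp y.
Proof. intros [H | ->]; [left; apply exp_increasing |]; lra. Qed.

Lemma Cmod_Cexp z : Cmod (Cexp z) = exp (fst z).
Proof.
  unfold Cexp, Cmod; cbn [fst snd].
  replace ((exp (fst z) * cos (snd z)) ^ 2 + (exp (fst z) * sin (snd z)) ^ 2)
    with (exp (fst z) ^ 2 * (sin (snd z) ^ 2 + cos (snd z) ^ 2)) by ring.
  rewrite <- !Rsqr_pow2, sin2_cos2, Rmult_1_r, Rsqr_pow2.
  apply sqrt_pow2; left; apply exp_pos.
Qed.

Lemma Cmod_eexp z t : Cmod (eexp z t) = exp (fst z * t).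
Proof. unfold eexp; rewrite Cmod_Cexp; cbn; f_equal; ring. Qed.

(* Both identities use [lp], the root that stays bounded as |k| grows. *)
Lemma Ea_eq lp lm t : lp <> lm -> Ea lp lm t = Cminus (eexp lp t) (Cmult lp (E1 lp lm t)).
Proof. intro H; unfold Ea, E1; field; now apply Cminus_eq_contra. Qed.

Lemma Eb_eq lp lm t : lp <> lm -> Eb lp lm t = Cplus (eexp lm t) (Cmult lp (E1 lp lm t)).
Proof. intro H; unfold Eb, E1; field; now apply Cminus_eq_contra. Qed.

Lemma Cmod_Ea_Eb_le lp lm t : lp <> lm ->
  Cmod (Ea lp lm t) <= exp (fst lp * t) + Cmod lp * Cmod (E1 lp lm t) /\
  Cmod (Eb lp lm t) <= exp (fst lm * t) + Cmod lp * Cmod (E1 lp lm t).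
Proof.
  intro H; rewrite Ea_eq, Eb_eq, <- Cmod_mult, <- !Cmod_eexp by exact H; split.
  - unfold Cminus; rewrite <- (Cmod_opp (Cmult _ _)); apply Cmod_triangle.
  - apply Cmod_triangle.
Qed.

Lemma E1_real a b t : a <> b ->
  E1 (RtoC a) (RtoC b) t = RtoC ((exp (a * t) - exp (b * t)) / (a - b)).
Proof.
  intro H.
  assert (Hexp : forall x, eexp (RtoC x) t = RtoC (exp (x * t))).
  { intro x; unfold eexp, Cexp, RtoC; cbn.
    replace (x * 0 + 0 * t) with 0 by ring; replace (x * t - 0 * 0) with (x * t) by ring.
    rewrite cos_0, sin_0, Rmult_1_r, Rmult_0_r; reflexivity. }
  assert (Hab : Cminus (RtoC a) (RtoC b) <> RtoC 0).
  { rewrite <- RtoC_minus; intro E; apply RtoC_inj in E; lra. }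
  unfold E1; rewrite !Hexp, <- !RtoC_minus, RtoC_div by (intro; lra).
  reflexivity.
Qed.

Lemma E1_conj l v t : v <> 0 ->
  E1 (l, v) (l, - v) t = RtoC (exp (l * t) * sin (v * t) / v).
Proof.
  intro Hv.
  assert (Hz : Cminus (l, v) (l, - v) <> RtoC 0).
  { intro E; apply (f_equal snd) in E; cbn in E; lra. }
  unfold E1; rewrite <- (Cmult_1_r (RtoC _)), <- (Cinv_r _ Hz), Cmult_assoc.
  unfold Cdiv; f_equal.
  unfold eexp, Cexp; apply injective_projections; cbn;
    replace (l * 0 + - v * t) with (- (v * t)) by ring;
    replace (l * 0 + v * t) with (v * t) by ring;
    replace (l * t - - v * 0) with (l * t) by ring;
    replace (l * t - v * 0) with (l * t) by ring;
    rewrite ?cos_neg, ?sin_neg; field; exact Hv.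
Qed.

Lemma divdiff_exp_le_t a b t : b < a -> 0 <= t ->
  Rabs ((exp (a * t) - exp (b * t)) / (a - b)) <= t * exp (a * t).
Proof.
  intros Hab Ht.
  assert (E : exp (b * t) = exp (a * t) * exp ((b - a) * t))
    by (rewrite <- exp_plus; f_equal; ring).
  assert (H1 := exp_ineq1_le ((b - a) * t)).
  assert (H2 : exp ((b - a) * t) <= 1) by (rewrite <- exp_0; apply exp_le_compat; nra).
  assert (Hp := exp_pos (a * t)).
  unfold Rdiv; rewrite Rabs_mult, Rabs_inv, !Rabs_pos_eq by (rewrite ?E; nra).
  apply Rmult_le_reg_r with (a - b); [lra |].
  rewrite Rmult_assoc, Rinv_l, E by lra; nra.
Qed.

Lemma divdiff_exp_le_sum a b t : b < a ->
  Rabs ((exp (a * t) - exp (b * t)) / (a - b)) <= (exp (a * t) + exp (b * t)) / (a - b).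
Proof.
  intro Hab; unfold Rdiv; rewrite Rabs_mult, Rabs_inv, (Rabs_pos_eq (a - b)) by lra.
  apply Rmult_le_compat_r; [left; apply Rinv_0_lt_compat; lra |].
  assert (Hp := exp_pos (a * t)); assert (Hq := exp_pos (b * t)).
  apply Rabs_le; lra.
Qed.

Lemma Rabs_sin_le x : 0 <= x -> Rabs (sin x) <= x.
Proof.
  intro Hx; destruct (Rle_lt_dec x 1).
  - destruct (Req_dec x 0) as [-> | Hx0]; [rewrite sin_0, Rabs_R0; lra |].
    rewrite Rabs_pos_eq; [left; apply sin_lt_x; lra |].
    apply sin_ge_0; [lra |]; assert (H := PI2_1); lra.
  - assert (H := SIN_bound x); apply Rabs_le; lra.
Qed.

Lemma sinc_exp_le l v t : 0 < v -> 0 <= t ->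
  Rabs (exp (l * t) * sin (v * t) / v) <= exp (l * t) / v /\
  Rabs (exp (l * t) * sin (v * t) / v) <= t * exp (l * t).
Proof.
  intros Hv Ht.
  assert (Hp := exp_pos (l * t)).
  assert (Hs := Rabs_sin_le (v * t) ltac:(nra)).
  assert (Hs1 : Rabs (sin (v * t)) <= 1) by (apply Rabs_le, SIN_bound).
  assert (Hs0 := Rabs_pos (sin (v * t))).
  unfold Rdiv; rewrite !Rabs_mult, Rabs_inv, (Rabs_pos_eq v), (Rabs_pos_eq (exp _)) by lra.
  assert (Hi : 0 < / v) by (apply Rinv_0_lt_compat; lra).
  split.
  - apply Rmult_le_compat_r; nra.
  - replace (t * exp (l * t)) with (exp (l * t) * (v * t) * / v) by (field; lra).
    apply Rmult_le_compat_r; nra.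
Qed.

Lemma t_exp_le r t : 0 < r -> 0 <= t -> t * exp (- r * t) <= 2 / r * exp (- (r / 2) * t).
Proof.
  intros Hr Ht.
  assert (Hx := exp_ineq1_le (r / 2 * t)).
  assert (Hinv : exp (r / 2 * t) * exp (- (r / 2) * t) = 1)
    by (rewrite <- exp_plus, <- exp_0; f_equal; ring).
  assert (Hsplit : exp (- r * t) = exp (- (r / 2) * t) * exp (- (r / 2) * t))
    by (rewrite <- exp_plus; f_equal; field).
  assert (Hp := exp_pos (- (r / 2) * t)).
  assert (Hxt : r / 2 * t * exp (- (r / 2) * t) <= 1) by nra.
  rewrite Hsplit.
  replace (t * (exp (- (r / 2) * t) * exp (- (r / 2) * t)))
    with (2 / r * (r / 2 * t * exp (- (r / 2) * t)) * exp (- (r / 2) * t)) by (field; lra).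
  apply Rmult_le_compat_r; [lra |].
  rewrite <- (Rmult_1_r (2 / r)) at 2.
  apply Rmult_le_compat_l; [apply Rlt_le, Rdiv_lt_0_compat |]; lra.
Qed.

(* [lam_p] and [lam_m] are the roots of [X^2 + char_b X + char_c]. *)
Definition char_b (mu : R) (k : nat -> R) : R := mu * knorm k ^ 2.
Definition char_c (gam bet : R) (k : nat -> R) : R := gam ^ 2 * knorm k ^ 2 + bet ^ 2.

Lemma disc_char gam bet mu k :
  Defs.disc gam bet mu k = char_b mu k ^ 2 - 4 * char_c gam bet k.
Proof. unfold Defs.disc, char_b, char_c; ring. Qed.

Lemma char_b_ge0 mu k : 0 < mu -> 0 <= char_b mu k.
Proof. intro Hm; unfold char_b; apply Rmult_le_pos; [lra | apply pow2_ge_0]. Qed.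

Lemma char_c_pos gam bet k : 0 < bet -> 0 < char_c gam bet k.
Proof. intro Hb; unfold char_c; assert (H := pow2_ge_0 (gam * knorm k)); nra. Qed.

Lemma real_root_bounds m q s : 0 < m -> 0 < q -> 0 <= s -> s ^ 2 = m ^ 2 - 4 * q ->
  0 < q / m /\ q / m <= m / 2 - s / 2 <= Rmin (m / 2) (2 * q / m).
Proof.
  intros Hm Hq Hs Hs2.
  assert (Hsm : s < m) by nra.
  assert (Hprod : (m / 2 - s / 2) * (m / 2 + s / 2) = q) by nra.
  assert (Hp : 0 < m / 2 - s / 2) by lra.
  split; [apply Rdiv_lt_0_compat; lra |].
  split; [| apply Rmin_glb; [lra |]];
    apply Rmult_le_reg_r with m; trivial; unfold Rdiv; rewrite ?Rmult_assoc, ?Rinv_l; nra.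
Qed.

Lemma lam_real_roots gam bet mu k : 0 < bet -> 0 < mu -> 0 <= Defs.disc gam bet mu k ->
  exists a b, lam_p gam bet mu k = RtoC a /\ lam_m gam bet mu k = RtoC b /\
    a - b = sqrt (Defs.disc gam bet mu k) /\ b <= - char_b mu k / 2 /\
    0 < char_c gam bet k / char_b mu k /\
    char_c gam bet k / char_b mu k <= - a
      <= Rmin (char_b mu k / 2) (2 * char_c gam bet k / char_b mu k).
Proof.
  intros Hb Hm HD.
  set (s := sqrt (Defs.disc gam bet mu k)).
  assert (Hs := sqrt_pos (Defs.disc gam bet mu k)); fold s in Hs.
  assert (Hs2 : s ^ 2 = char_b mu k ^ 2 - 4 * char_c gam bet k)
    by (unfold s; rewrite pow2_sqrt, disc_char; lra).
  assert (Hq := char_c_pos gam bet k Hb).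
  assert (HB := char_b_ge0 mu k Hm).
  assert (HB0 : 0 < char_b mu k) by nra.
  assert (Hr := real_root_bounds _ _ _ HB0 Hq Hs Hs2).
  exists (- char_b mu k / 2 + s / 2), (- char_b mu k / 2 - s / 2).
  unfold lam_p, lam_m, Csqrt_real; destruct (Rle_dec 0 (Defs.disc gam bet mu k)) as [_ | ]; [| lra].
  fold s; repeat split; try (apply injective_projections; cbn; unfold char_b; field); lra.
Qed.

Lemma lam_conj_roots gam bet mu k : Defs.disc gam bet mu k < 0 ->
  exists v, 0 < v /\ lam_p gam bet mu k = (- char_b mu k / 2, v) /\
    lam_m gam bet mu k = (- char_b mu k / 2, - v) /\
    v ^ 2 = char_c gam bet k - char_b mu k ^ 2 / 4.
Proof.
  intro HD.
  set (v := sqrt (- Defs.disc gam bet mu k) / 2).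
  assert (Hv : 0 < v) by (apply Rdiv_lt_0_compat; [apply sqrt_lt_R0 |]; lra).
  exists v; unfold lam_p, lam_m, Csqrt_real.
  destruct (Rle_dec 0 (Defs.disc gam bet mu k)); [lra |].
  unfold char_b; repeat split; try (apply injective_projections; cbn; unfold v; field); trivial.
  unfold v; replace ((sqrt (- Defs.disc gam bet mu k) / 2) ^ 2)
    with (sqrt (- Defs.disc gam bet mu k) ^ 2 / 4) by field.
  rewrite pow2_sqrt, disc_char by lra; unfold char_b; field.
Qed.

Lemma lam_m_re_le gam bet mu k : 0 < bet -> 0 < mu ->
  fst (lam_m gam bet mu k) <= fst (lam_p gam bet mu k).
Proof.
  intros Hb Hm; destruct (Rle_lt_dec 0 (Defs.disc gam bet mu k)) as [HD | HD].
  - destruct (lam_real_roots gam bet mu k Hb Hm HD) as (a & b & -> & -> & Hab & _).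
    cbn; assert (H := sqrt_pos (Defs.disc gam bet mu k)); lra.
  - destruct (lam_conj_roots gam bet mu k HD) as (v & _ & -> & -> & _); cbn; lra.
Qed.

Lemma lam_p_re_le gam bet mu k : 0 < bet -> 0 < mu -> 0 < knorm k ->
  fst (lam_p gam bet mu k) <= - Rmin (mu * knorm k ^ 2 / 2) (gam ^ 2 / mu).
Proof.
  intros Hb Hm Hn; destruct (Rle_lt_dec 0 (Defs.disc gam bet mu k)) as [HD | HD].
  - destruct (lam_real_roots gam bet mu k Hb Hm HD) as (a & b & -> & _ & _ & _ & _ & Ha & _).
    cbn [fst RtoC]; enough (gam ^ 2 / mu <= char_c gam bet k / char_b mu k)
      by (assert (Rmin (mu * knorm k ^ 2 / 2) (gam ^ 2 / mu) <= gam ^ 2 / mu) by apply Rmin_r; lra).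
    unfold char_b, char_c.
    assert (Hn2 : 0 < knorm k ^ 2) by (apply pow_lt; lra).
    replace (gam ^ 2 / mu) with (gam ^ 2 * knorm k ^ 2 / (mu * knorm k ^ 2)) by (field; lra).
    apply Rmult_le_compat_r; [left; apply Rinv_0_lt_compat; nra |].
    assert (H := pow2_ge_0 bet); lra.
  - destruct (lam_conj_roots gam bet mu k HD) as (v & _ & -> & _ & _); cbn [fst]; unfold char_b.
    assert (H := Rmin_l (mu * knorm k ^ 2 / 2) (gam ^ 2 / mu)); lra.
Qed.

Lemma Cmod_lam_p_le gam bet mu k : 0 < gam -> 0 < bet -> 0 < mu ->
  Cmod (lam_p gam bet mu k) <= mu * knorm k ^ 2 + gam * knorm k + bet.
Proof.
  intros Hg Hb Hm.
  assert (Hn := sqrt_pos (norm2 k)); fold (knorm k) in Hn.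
  assert (Hgn : 0 <= gam * knorm k) by nra.
  assert (HB := char_b_ge0 mu k Hm).
  destruct (Rle_lt_dec 0 (Defs.disc gam bet mu k)) as [HD | HD].
  - destruct (lam_real_roots gam bet mu k Hb Hm HD) as (a & b & -> & _ & _ & _ & Hq & Ha & Ha').
    assert (H := Rmin_l (char_b mu k / 2) (2 * char_c gam bet k / char_b mu k)).
    rewrite Cmod_R, Rabs_left by lra; unfold char_b in *; lra.
  - destruct (lam_conj_roots gam bet mu k HD) as (v & _ & -> & _ & Hv2).
    apply Rsqr_incr_0_var; [| nra]; rewrite !Rsqr_pow2, Cmod2_alt; cbn [Re Im fst snd].
    unfold char_b, char_c in *; nra.
Qed.

Lemma Cmod_E1_le_t gam bet mu t k : 0 < bet -> 0 < mu -> 0 <= t ->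
  lam_p gam bet mu k <> lam_m gam bet mu k ->
  Cmod (E1 (lam_p gam bet mu k) (lam_m gam bet mu k) t) <= t * exp (fst (lam_p gam bet mu k) * t).
Proof.
  intros Hb Hm Ht Hne; destruct (Rle_lt_dec 0 (Defs.disc gam bet mu k)) as [HD | HD].
  - destruct (lam_real_roots gam bet mu k Hb Hm HD) as (a & b & Ep & Em & Hab & _).
    rewrite Ep, Em in *; assert (Hs := sqrt_pos (Defs.disc gam bet mu k)).
    assert (b < a) by (apply Rnot_le_lt; intro; apply Hne; f_equal; lra).
    rewrite E1_real, Cmod_R by lra; cbn [fst RtoC]; apply divdiff_exp_le_t; lra.
  - destruct (lam_conj_roots gam bet mu k HD) as (v & Hv & -> & -> & _).
    rewrite E1_conj, Cmod_R by lra; exact (proj2 (sinc_exp_le _ _ _ Hv Ht)).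
Qed.

Lemma E1_lam_small_k gam bet mu t k : 0 < bet -> 0 < mu -> 0 <= t ->
  knorm k <= 1 -> mu * knorm k <= bet ->
  fst (lam_p gam bet mu k) = - (1/2) * mu * knorm k ^ 2 /\
  fst (lam_m gam bet mu k) = - (1/2) * mu * knorm k ^ 2 /\
  Cmod (E1 (lam_p gam bet mu k) (lam_m gam bet mu k) t)
    <= 2 / bet * exp (- (1/2) * mu * knorm k ^ 2 * t).
Proof.
  intros Hb Hm Ht Hn1 Hnb.
  assert (Hn := sqrt_pos (norm2 k)); fold (knorm k) in Hn.
  assert (Hcb : char_b mu k <= bet) by (unfold char_b; nra).
  assert (HB := char_b_ge0 mu k Hm).
  assert (Hc : bet ^ 2 <= char_c gam bet k)
    by (unfold char_c; assert (H := pow2_ge_0 (gam * knorm k)); nra).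
  assert (HD : Defs.disc gam bet mu k < 0) by (rewrite disc_char; nra).
  destruct (lam_conj_roots gam bet mu k HD) as (v & Hv & -> & -> & Hv2); cbn [fst].
  assert (Hvb : bet / 2 <= v) by nra.
  unfold char_b; repeat split; try field.
  rewrite E1_conj, Cmod_R by lra.
  eapply Rle_trans; [apply (proj1 (sinc_exp_le _ _ _ Hv Ht)) |].
  replace (- (1/2) * mu * knorm k ^ 2 * t) with (- (mu * knorm k ^ 2) / 2 * t) by field.
  assert (Hp := exp_pos (- (mu * knorm k ^ 2) / 2 * t)).
  unfold Rdiv; rewrite (Rmult_comm (2 * / bet)); apply Rmult_le_compat_l; [lra |].
  replace (2 * / bet) with (/ (bet / 2)) by (field; lra).
  apply Rinv_le_contravar; lra.
Qed.

Lemma E1_lam_large_k gam bet mu t k : 0 < gam -> 0 < bet -> 0 < mu ->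
  1 <= knorm k -> 3 * (gam + bet) <= mu * knorm k ->
  Cmod (E1 (lam_p gam bet mu k) (lam_m gam bet mu k) t)
    <= 2 / mu * / knorm k ^ 2
         * (exp (fst (lam_p gam bet mu k) * t) + exp (fst (lam_m gam bet mu k) * t)) /\
  fst (lam_m gam bet mu k) <= - (mu / 2 * knorm k ^ 2) /\
  Cmod (lam_p gam bet mu k) <= 2 * (gam ^ 2 + bet ^ 2) / mu.
Proof.
  intros Hg Hb Hm Hn1 Hmn.
  assert (Hn2 : 1 <= knorm k ^ 2) by nra.
  assert (HB : 0 < char_b mu k) by (unfold char_b; nra).
  assert (Hq : char_c gam bet k <= (gam ^ 2 + bet ^ 2) * knorm k ^ 2)
    by (unfold char_c; assert (H := pow2_ge_0 bet); nra).
  assert (Hgb : 9 * (gam ^ 2 + bet ^ 2) <= (mu * knorm k) ^ 2) by nra.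
  assert (HDq : char_b mu k ^ 2 / 4 <= Defs.disc gam bet mu k)
    by (rewrite disc_char; unfold char_b in *; nra).
  assert (HD : 0 <= Defs.disc gam bet mu k) by nra.
  destruct (lam_real_roots gam bet mu k Hb Hm HD) as (a & b & -> & -> & Hab & Hbm & Hq0 & Hqa & Ha).
  cbn [fst RtoC]; rewrite Cmod_R.
  assert (Hs : char_b mu k / 2 <= a - b).
  { rewrite Hab; apply Rsqr_incr_0_var; [| apply sqrt_pos].
    rewrite Rsqr_sqrt, Rsqr_pow2; lra. }
  assert (H2 := Rmin_r (char_b mu k / 2) (2 * char_c gam bet k / char_b mu k)).
  unfold char_b in *; repeat split; [| lra |].
  - rewrite E1_real, Cmod_R by lra; eapply Rle_trans; [apply divdiff_exp_le_sum; lra |].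
    assert (He := exp_pos (a * t)); assert (He' := exp_pos (b * t)).
    unfold Rdiv; rewrite (Rmult_comm (exp (a * t) + exp (b * t))).
    apply Rmult_le_compat_r; [lra |].
    replace (2 * / mu * / knorm k ^ 2) with (/ (mu * knorm k ^ 2 / 2)) by (field; split; lra).
    apply Rinv_le_contravar; lra.
  - rewrite Rabs_left1 by lra.
    replace (2 * (gam ^ 2 + bet ^ 2) / mu)
      with (2 * ((gam ^ 2 + bet ^ 2) * knorm k ^ 2) / (mu * knorm k ^ 2)) by (field; split; lra).
    enough (2 * char_c gam bet k / (mu * knorm k ^ 2)
              <= 2 * ((gam ^ 2 + bet ^ 2) * knorm k ^ 2) / (mu * knorm k ^ 2)) by lra.
    unfold Rdiv; apply Rmult_le_compat_r; [left; apply Rinv_0_lt_compat |]; lra.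
Qed.

Definition Nblock (a b d : C) (gam bet : R) (k : nat -> R) (i j : nat) : C :=
  let dlt := fun p q : nat => if Nat.eqb p q then RtoC 1 else RtoC 0 in
  match blk i, blk j with
  | 0%nat, 0%nat => a
  | 0%nat, 1%nat => Cmult (Cmult (Cmult (RtoC (- gam)) Ci) (RtoC (k (subi j)))) d
  | 1%nat, 0%nat => Cmult (Cmult (Cmult (RtoC (- gam)) Ci) (RtoC (k (subi i)))) d
  | 1%nat, 1%nat => Cmult b (dlt (subi i) (subi j))
  | 1%nat, 2%nat => Cmult (Cmult (RtoC (- bet)) d) (dlt (subi i) (subi j))
  | 2%nat, 1%nat => Cmult (Cmult (RtoC bet) d) (dlt (subi i) (subi j))
  | 2%nat, 2%nat => Cmult a (dlt (subi i) (subi j))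
  | _, _ => RtoC 0
  end.

Lemma Nmat_Nblock gam bet mu t k i j :
  Nmat gam bet mu t k i j =
  Nblock (Ea (lam_p gam bet mu k) (lam_m gam bet mu k) t)
         (Eb (lam_p gam bet mu k) (lam_m gam bet mu k) t)
         (E1 (lam_p gam bet mu k) (lam_m gam bet mu k) t) gam bet k i j.
Proof. reflexivity. Qed.

Lemma Rabs_coord_le_knorm k m : (m < 3)%nat -> Rabs (k m) <= knorm k.
Proof.
  intro Hm; apply Rsqr_incr_0_var; [| apply sqrt_pos].
  rewrite <- Rsqr_abs; unfold knorm; rewrite Rsqr_sqrt by (unfold norm2; nra).
  unfold norm2, Rsqr; destruct m as [| [| [| m]]]; try lia; nra.
Qed.

Lemma Cmod_Nblock_le a b d gam bet k A B D i j : 0 < gam -> 0 < bet ->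
  Cmod a <= A -> Cmod b <= B -> Cmod d <= D -> (i < 7)%nat -> (j < 7)%nat ->
  Cmod (Nblock a b d gam bet k i j)
    <= pat7 A (gam * knorm k * D) (gam * knorm k * D) B (bet * D) (bet * D) A i j.
Proof.
  intros Hg Hb Ha Hb' Hd Hi Hj.
  assert (Hkd : forall m, (m < 3)%nat -> gam * Rabs (k m) * Cmod d <= gam * knorm k * D).
  { intros m Hm; apply Rmult_le_compat; [| apply Cmod_ge_0 | | exact Hd].
    - apply Rmult_le_pos; [lra | apply Rabs_pos].
    - apply Rmult_le_compat_l; [lra | exact (Rabs_coord_le_knorm k m Hm)]. }
  assert (K0 := Hkd 0%nat ltac:(lia)); assert (K1 := Hkd 1%nat ltac:(lia));
    assert (K2 := Hkd 2%nat ltac:(lia)).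
  assert (Hbd : bet * Cmod d <= bet * D) by nra.
  destruct i as [| [| [| [| [| [| [| i]]]]]]]; try lia;
  destruct j as [| [| [| [| [| [| [| j]]]]]]]; try lia;
  cbn [Nblock pat7 blk subi Nat.eqb Nat.leb Nat.sub];
  rewrite ?Cmod_mult, ?Cmod_R, ?Cmod_Ci, ?Rabs_R1, ?Rabs_R0, ?Rabs_Ropp,
    ?(Rabs_pos_eq gam), ?(Rabs_pos_eq bet) by lra; lra.
Qed.

Lemma pat7_le a00 a01 a10 a11 a12 a21 a22 b00 b01 b10 b11 b12 b21 b22 i j :
  a00 <= b00 -> a01 <= b01 -> a10 <= b10 -> a11 <= b11 -> a12 <= b12 -> a21 <= b21 ->
  a22 <= b22 ->
  pat7 a00 a01 a10 a11 a12 a21 a22 i j <= pat7 b00 b01 b10 b11 b12 b21 b22 i j.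
Proof.
  intros; unfold pat7; destruct (Nat.eqb (subi i) (subi j));
    destruct (blk i) as [| [| [|]]]; destruct (blk j) as [| [| [|]]]; lra.
Qed.

Lemma pat7_scale C0 e p00 p01 p10 p11 p12 p21 p22 i j :
  C0 * pat7 p00 p01 p10 p11 p12 p21 p22 i j * e =
  pat7 (C0 * p00 * e) (C0 * p01 * e) (C0 * p10 * e) (C0 * p11 * e) (C0 * p12 * e)
       (C0 * p21 * e) (C0 * p22 * e) i j.
Proof.
  unfold pat7; destruct (Nat.eqb (subi i) (subi j));
    destruct (blk i) as [| [| [|]]]; destruct (blk j) as [| [| [|]]]; ring.
Qed.

Lemma pat7_lin C0 X Y p00 p01 p10 p11 p12 p21 p22 q00 q01 q10 q11 q12 q21 q22 i j :
  C0 * (pat7 p00 p01 p10 p11 p12 p21 p22 i j * X + pat7 q00 q01 q10 q11 q12 q21 q22 i j * Y) =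
  pat7 (C0 * (p00 * X + q00 * Y)) (C0 * (p01 * X + q01 * Y)) (C0 * (p10 * X + q10 * Y))
       (C0 * (p11 * X + q11 * Y)) (C0 * (p12 * X + q12 * Y)) (C0 * (p21 * X + q21 * Y))
       (C0 * (p22 * X + q22 * Y)) i j.
Proof.
  unfold pat7; destruct (Nat.eqb (subi i) (subi j));
    destruct (blk i) as [| [| [|]]]; destruct (blk j) as [| [| [|]]]; ring.
Qed.

Lemma pat7_nonneg a00 a01 a10 a11 a12 a21 a22 i j :
  0 <= a00 -> 0 <= a01 -> 0 <= a10 -> 0 <= a11 -> 0 <= a12 -> 0 <= a21 -> 0 <= a22 ->
  0 <= pat7 a00 a01 a10 a11 a12 a21 a22 i j.
Proof.
  intros; unfold pat7; destruct (Nat.eqb (subi i) (subi j));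
    destruct (blk i) as [| [| [|]]]; destruct (blk j) as [| [| [|]]]; lra.
Qed.

Lemma Cmod_Nmat_le_uniform gam bet mu t k K N nu e i j :
  0 < gam -> 0 < bet -> 0 <= K -> 0 <= e -> 0 <= N -> 0 <= nu -> knorm k <= N * nu ->
  Cmod (Ea (lam_p gam bet mu k) (lam_m gam bet mu k) t) <= K * e ->
  Cmod (Eb (lam_p gam bet mu k) (lam_m gam bet mu k) t) <= K * e ->
  Cmod (E1 (lam_p gam bet mu k) (lam_m gam bet mu k) t) <= K * e ->
  (i < 7)%nat -> (j < 7)%nat ->
  Cmod (Nmat gam bet mu t k i j) <= K * (1 + gam * N + bet) * pat7 1 nu nu 1 1 1 1 i j * e.
Proof.
  intros Hg Hb HK He HN Hnu HnN HA HB HD Hi Hj.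
  set (P := K * e); assert (HP : 0 <= P) by (apply Rmult_le_pos; lra).
  assert (HgN : 0 <= gam * N) by nra.
  assert (Hnu' : 0 <= nu * P) by nra.
  assert (Hgn : gam * knorm k * P <= gam * N * (nu * P))
    by (rewrite <- Rmult_assoc, (Rmult_assoc gam N nu); apply Rmult_le_compat_r; nra).
  replace (K * (1 + gam * N + bet) * pat7 1 nu nu 1 1 1 1 i j * e)
    with ((1 + gam * N + bet) * pat7 1 nu nu 1 1 1 1 i j * P) by (unfold P; ring).
  rewrite Nmat_Nblock, pat7_scale.
  eapply Rle_trans; [apply Cmod_Nblock_le; eauto |]; apply pat7_le; fold P; nra.
Qed.

Lemma Nmat_small gam bet mu : 0 < gam -> 0 < bet -> 0 < mu ->
  exists C, 0 < C /\ forall t k, 0 <= t -> lam_p gam bet mu k <> lam_m gam bet mu k ->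
    knorm k <= Rmin 1 (bet / mu) -> forall i j, (i < 7)%nat -> (j < 7)%nat ->
    Cmod (Nmat gam bet mu t k i j)
      <= C * pat7 1 (knorm k) (knorm k) 1 1 1 1 i j * exp (- (1/2) * mu * knorm k ^ 2 * t).
Proof.
  intros Hg Hb Hm.
  set (K := 1 + 2 / bet * (1 + mu + gam + bet)).
  assert (Hbi : 0 < 2 / bet) by (apply Rdiv_lt_0_compat; lra).
  assert (HK : 2 / bet <= K) by (unfold K; nra).
  exists (K * (1 + gam * 1 + bet)); split; [nra |].
  intros t k Ht Hne Hk i j Hi Hj.
  assert (Hn := sqrt_pos (norm2 k)); fold (knorm k) in Hn.
  assert (Hn1 : knorm k <= 1) by (eapply Rle_trans; [exact Hk | apply Rmin_l]).
  assert (Hnb : mu * knorm k <= bet).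
  { assert (knorm k <= bet / mu) by (eapply Rle_trans; [exact Hk | apply Rmin_r]).
    apply Rmult_le_reg_r with (/ mu); [apply Rinv_0_lt_compat; lra |].
    rewrite Rmult_comm, <- Rmult_assoc, Rinv_l, Rmult_1_l by lra; exact H. }
  destruct (E1_lam_small_k gam bet mu t k Hb Hm Ht Hn1 Hnb) as (Hp & Hm' & HD).
  destruct (Cmod_Ea_Eb_le _ _ t Hne) as [HA HB]; rewrite Hp in HA; rewrite Hm' in HB.
  set (e := exp (- (1/2) * mu * knorm k ^ 2 * t)) in *.
  assert (He : 0 < e) by apply exp_pos.
  assert (Hl : Cmod (lam_p gam bet mu k) <= mu + gam + bet).
  { assert (knorm k ^ 2 <= 1) by nra.
    eapply Rle_trans; [apply Cmod_lam_p_le; lra |]; nra. }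
  assert (HlD : Cmod (lam_p gam bet mu k) * Cmod (E1 (lam_p gam bet mu k) (lam_m gam bet mu k) t)
                <= (mu + gam + bet) * (2 / bet * e))
    by (apply Rmult_le_compat; auto using Cmod_ge_0).
  apply Cmod_Nmat_le_uniform; trivial; try lra.
  all: assert (0 <= 2 / bet * e) by nra; unfold K; nra.
Qed.

Lemma Nmat_mid gam bet mu eps L c : 0 < gam -> 0 < bet -> 0 < mu -> 0 < eps -> eps <= L ->
  c <= Rmin (mu * eps ^ 2 / 2) (gam ^ 2 / mu) / 2 ->
  exists C, 0 < C /\ forall t k, 0 <= t -> lam_p gam bet mu k <> lam_m gam bet mu k ->
    eps <= knorm k <= L -> forall i j, (i < 7)%nat -> (j < 7)%nat ->
    Cmod (Nmat gam bet mu t k i j) <= C * pat7 1 1 1 1 1 1 1 i j * exp (- c * t).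
Proof.
  intros Hg Hb Hm He HeL Hc.
  set (r := Rmin (mu * eps ^ 2 / 2) (gam ^ 2 / mu)) in *.
  assert (Hr : 0 < r).
  { apply Rmin_glb_lt; apply Rdiv_lt_0_compat; try lra.
    - apply Rmult_lt_0_compat; [lra | apply pow_lt; lra].
    - apply pow_lt; lra. }
  set (Lam := mu * L ^ 2 + gam * L + bet).
  assert (HLam : 0 <= Lam) by (unfold Lam; assert (H := pow2_ge_0 L); nra).
  assert (Hri : 0 < 2 / r) by (apply Rdiv_lt_0_compat; lra).
  set (K := 1 + 2 / r * (1 + Lam)).
  assert (HK : 1 <= K)
    by (unfold K; assert (0 <= 2 / r * (1 + Lam)) by (apply Rmult_le_pos; lra); lra).
  assert (HgL : 0 <= gam * L) by nra.
  exists (K * (1 + gam * L + bet)); split; [apply Rmult_lt_0_compat; lra |].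
  intros t k Ht Hne [HeN HnL] i j Hi Hj.
  set (X := exp (- c * t)); assert (HX : 0 < X) by apply exp_pos.
  assert (Hgap : fst (lam_p gam bet mu k) <= - r).
  { eapply Rle_trans; [apply lam_p_re_le; lra |]; apply Ropp_le_contravar, Rmin_glb;
      [eapply Rle_trans; [apply Rmin_l |] | apply Rmin_r].
    assert (eps ^ 2 <= knorm k ^ 2) by (apply pow_incr; lra); nra. }
  assert (Hexp : forall x, x <= - r -> exp (x * t) <= X).
  { intros x Hx; apply exp_le_compat; nra. }
  assert (HD : Cmod (E1 (lam_p gam bet mu k) (lam_m gam bet mu k) t) <= 2 / r * X).
  { eapply Rle_trans; [apply Cmod_E1_le_t; trivial; lra |].
    assert (exp (fst (lam_p gam bet mu k) * t) <= exp (- r * t))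
      by (apply exp_le_compat, Rmult_le_compat_r; lra).
    eapply Rle_trans; [apply Rmult_le_compat_l; eassumption |].
    eapply Rle_trans; [apply t_exp_le; lra |].
    apply Rmult_le_compat_l; [lra |]; apply exp_le_compat; nra. }
  assert (Hl : Cmod (lam_p gam bet mu k) <= Lam).
  { eapply Rle_trans; [apply Cmod_lam_p_le; lra |].
    assert (knorm k ^ 2 <= L ^ 2) by (apply pow_incr; lra); unfold Lam; nra. }
  assert (HlD : Cmod (lam_p gam bet mu k) * Cmod (E1 (lam_p gam bet mu k) (lam_m gam bet mu k) t)
                <= Lam * (2 / r * X))
    by (apply Rmult_le_compat; auto using Cmod_ge_0).
  assert (Hre := lam_m_re_le gam bet mu k Hb Hm).
  destruct (Cmod_Ea_Eb_le _ _ t Hne) as [HA HB].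
  assert (exp (fst (lam_p gam bet mu k) * t) <= X) by (apply Hexp; lra).
  assert (exp (fst (lam_m gam bet mu k) * t) <= X) by (apply Hexp; lra).
  apply Cmod_Nmat_le_uniform; trivial; try lra.
  all: assert (0 <= 2 / r * X) by nra; unfold K; nra.
Qed.

Lemma Nmat_large gam bet mu c : 0 < gam -> 0 < bet -> 0 < mu ->
  c <= gam ^ 2 / mu -> c <= mu / 2 ->
  exists C, 0 < C /\ forall t k, 0 <= t -> lam_p gam bet mu k <> lam_m gam bet mu k ->
    1 + 3 * (gam + bet) / mu <= knorm k -> forall i j, (i < 7)%nat -> (j < 7)%nat ->
    Cmod (Nmat gam bet mu t k i j) <=
      C * (pat7 1 (/ knorm k) (/ knorm k) (/ knorm k ^ 2) (/ knorm k ^ 2) (/ knorm k ^ 2) 1 i j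
             * exp (- c * t)
           + pat7 (/ knorm k ^ 2) (/ knorm k) (/ knorm k) 1 (/ knorm k ^ 2) (/ knorm k ^ 2)
               (/ knorm k ^ 2) i j * exp (- c * knorm k ^ 2 * t)).
Proof.
  intros Hg Hb Hm Hcg Hcm.
  set (kap := 2 * (gam ^ 2 + bet ^ 2) / mu).
  assert (Hkap : 0 <= kap)
    by (apply Rmult_le_pos; [nra | left; apply Rinv_0_lt_compat; lra]).
  assert (Hmi : 0 < 2 / mu) by (apply Rdiv_lt_0_compat; lra).
  set (K := 1 + 2 / mu * (1 + kap)).
  assert (HK : 2 / mu * (1 + kap) <= K - 1) by (unfold K; lra).
  assert (HK1 : 1 <= K) by (assert (0 <= 2 / mu * (1 + kap)) by nra; lra).
  exists (K * (1 + gam + bet)); split; [apply Rmult_lt_0_compat; lra |].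
  intros t k Ht Hne Hk i j Hi Hj.
  assert (H3 : 0 <= 3 * (gam + bet) / mu) by (apply Rlt_le, Rdiv_lt_0_compat; lra).
  assert (Hn1 : 1 <= knorm k) by lra.
  assert (Hmn : 3 * (gam + bet) <= mu * knorm k).
  { apply Rmult_le_reg_r with (/ mu); [apply Rinv_0_lt_compat; lra |].
    replace (mu * knorm k * / mu) with (knorm k) by (field; lra); unfold Rdiv in Hk; lra. }
  destruct (E1_lam_large_k gam bet mu t k Hg Hb Hm Hn1 Hmn) as (HD & Hre_m & Hl).
  fold kap in Hl.
  set (X := exp (- c * t)); set (Y := exp (- c * knorm k ^ 2 * t)).
  set (w := / knorm k ^ 2) in *; set (z := / knorm k).
  assert (HX : 0 < X) by apply exp_pos; assert (HY : 0 < Y) by apply exp_pos.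
  assert (Hn2 : 1 <= knorm k ^ 2) by nra.
  assert (Hw : 0 < w <= 1).
  { split; [apply Rinv_0_lt_compat; lra |]; rewrite <- Rinv_1; apply Rinv_le_contravar; lra. }
  destruct Hw as [Hw0 Hw1].
  assert (Hz : z = knorm k * w) by (unfold z, w; field; lra).
  assert (HXp : exp (fst (lam_p gam bet mu k) * t) <= X).
  { apply exp_le_compat, Rmult_le_compat_r; [exact Ht |].
    eapply Rle_trans; [apply lam_p_re_le; lra |]; apply Ropp_le_contravar, Rmin_glb; nra. }
  assert (HYm : exp (fst (lam_m gam bet mu k) * t) <= Y).
  { assert (fst (lam_m gam bet mu k) <= - (c * knorm k ^ 2)) by nra.
    unfold Y; replace (- c * knorm k ^ 2 * t) with (- (c * knorm k ^ 2) * t) by ring.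
    apply exp_le_compat, Rmult_le_compat_r; lra. }
  set (lp := lam_p gam bet mu k) in *; set (lm := lam_m gam bet mu k) in *.
  assert (HD' : Cmod (E1 lp lm t) <= 2 / mu * (w * X + w * Y)).
  { eapply Rle_trans; [exact HD |]; rewrite Rmult_assoc; apply Rmult_le_compat_l; nra. }
  assert (HlD : Cmod lp * Cmod (E1 lp lm t) <= kap * (2 / mu * (w * X + w * Y)))
    by (apply Rmult_le_compat; auto using Cmod_ge_0).
  destruct (Cmod_Ea_Eb_le lp lm t Hne) as [HA HB].
  assert (Hkm : 0 <= kap * (2 / mu)) by (apply Rmult_le_pos; lra).
  assert (Hwx : 0 <= kap * (2 / mu) * X * (1 - w))
    by (apply Rmult_le_pos; [apply Rmult_le_pos |]; lra).
  assert (Hwy : 0 <= kap * (2 / mu) * Y * (1 - w))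
    by (apply Rmult_le_pos; [apply Rmult_le_pos |]; lra).
  assert (Hk1 : 1 + kap * (2 / mu) <= K) by (unfold K; nra).
  assert (Hkk : kap * (2 / mu) <= K) by lra.
  assert (H2K : 2 / mu <= K) by (unfold K; nra).
  assert (Hmono : forall a S, a <= K -> 0 <= S -> a * S <= K * S)
    by (intros; apply Rmult_le_compat_r; lra).
  rewrite Nmat_Nblock, pat7_lin; fold lp lm.
  eapply Rle_trans; [apply Cmod_Nblock_le with (A := K * (X + w * Y)) (B := K * (w * X + Y))
                                               (D := K * (w * X + w * Y)); trivial |].
  { assert (HwY : 0 <= w * Y) by nra.
    assert (H1 := Hmono _ _ Hk1 (Rlt_le _ _ HX)); assert (H2 := Hmono _ _ Hkk HwY); nra. }
  { assert (HwX : 0 <= w * X) by nra.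
    assert (H1 := Hmono _ _ Hk1 (Rlt_le _ _ HY)); assert (H2 := Hmono _ _ Hkk HwX); nra. }
  { assert (HS : 0 <= w * X + w * Y) by nra.
    assert (H1 := Hmono _ _ H2K HS); lra. }
  assert (PX : 0 <= K * X) by nra; assert (PY : 0 <= K * Y) by nra.
  assert (PwX : 0 <= K * (w * X)) by nra; assert (PwY : 0 <= K * (w * Y)) by nra.
  assert (PnX : 0 <= knorm k * (K * (w * X))) by nra.
  assert (PnY : 0 <= knorm k * (K * (w * Y))) by nra.
  rewrite Hz; apply pat7_le; nra.
Qed.

Lemma Rle_mult_weaken x C C' P : 0 <= P -> C <= C' -> x <= C * P -> x <= C' * P.
Proof. intros HP HC Hx; eapply Rle_trans; [exact Hx | apply Rmult_le_compat_r; assumption]. Qed.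

Theorem proposition5p1 (gam bet mu : R) :
  0 < gam -> 0 < bet -> 0 < mu ->
  exists eps L : R, 0 < eps < L /\
  exists C0 c : R, 0 < C0 /\ 0 < c /\
  forall (t : R) (k : nat -> R), 0 <= t ->
    lam_p gam bet mu k <> lam_m gam bet mu k ->
    forall i j : nat, (i < 7)%nat -> (j < 7)%nat ->
      (knorm k <= eps ->
         Cmod (Nmat gam bet mu t k i j) <=
         C0 * pat7 1 (knorm k) (knorm k) 1 1 1 1 i j * exp (- (1/2) * mu * knorm k ^ 2 * t)) /\
      (eps <= knorm k <= L ->
         Cmod (Nmat gam bet mu t k i j) <=
         C0 * pat7 1 1 1 1 1 1 1 i j * exp (- c * t)) /\
      (L <= knorm k ->
         Cmod (Nmat gam bet mu t k i j) <=
         C0 * (pat7 1 (/ knorm k) (/ knorm k) (/ knorm k ^ 2) (/ knorm k ^ 2) (/ knorm k ^ 2) 1 i j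
                 * exp (- c * t)
               + pat7 (/ knorm k ^ 2) (/ knorm k) (/ knorm k) 1 (/ knorm k ^ 2) (/ knorm k ^ 2) (/ knorm k ^ 2) i j
                 * exp (- c * knorm k ^ 2 * t))).
Proof.
  intros Hg Hb Hm.
  set (eps := Rmin 1 (bet / mu)); set (L := 1 + 3 * (gam + bet) / mu).
  set (r := Rmin (mu * eps ^ 2 / 2) (gam ^ 2 / mu)); set (c := Rmin (r / 2) (mu / 2)).
  assert (He : 0 < eps) by (apply Rmin_glb_lt; [lra | apply Rdiv_lt_0_compat; lra]).
  assert (HeL : eps < L) by (assert (eps <= 1) by apply Rmin_l;
    assert (0 < 3 * (gam + bet) / mu) by (apply Rdiv_lt_0_compat; lra); unfold L; lra).
  assert (Hc : 0 < c).
  { apply Rmin_glb_lt; [| lra]; apply Rdiv_lt_0_compat; [| lra].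
    apply Rmin_glb_lt; apply Rdiv_lt_0_compat; try apply Rmult_lt_0_compat; try apply pow_lt; lra. }
  destruct (Nmat_small gam bet mu Hg Hb Hm) as (C1 & HC1 & Hsmall).
  destruct (Nmat_mid gam bet mu eps L c Hg Hb Hm He (Rlt_le _ _ HeL) (Rmin_l _ _))
    as (C2 & HC2 & Hmid).
  destruct (Nmat_large gam bet mu c Hg Hb Hm) as (C3 & HC3 & Hlarge);
    [assert (c <= r / 2) by apply Rmin_l; assert (r <= gam ^ 2 / mu) by apply Rmin_r; lra
    | apply Rmin_r |].
  exists eps, L; split; [lra |]; exists (C1 + C2 + C3), c; split; [lra | split; [exact Hc |]].
  intros t k Ht Hne i j Hi Hj; repeat split; intro Hk.
  - assert (Hn := sqrt_pos (norm2 k)); fold (knorm k) in Hn.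
    rewrite Rmult_assoc; apply (Rle_mult_weaken _ C1);
      [| lra | rewrite <- Rmult_assoc; apply Hsmall; trivial].
    apply Rmult_le_pos; [apply pat7_nonneg; lra | apply Rlt_le, exp_pos].
  - rewrite Rmult_assoc; apply (Rle_mult_weaken _ C2);
      [| lra | rewrite <- Rmult_assoc; apply Hmid; trivial].
    apply Rmult_le_pos; [apply pat7_nonneg; lra | apply Rlt_le, exp_pos].
  - assert (Hz : 0 <= / knorm k) by (apply Rlt_le, Rinv_0_lt_compat; lra).
    assert (Hw : 0 <= / knorm k ^ 2) by (apply Rlt_le, Rinv_0_lt_compat, pow_lt; lra).
    apply (Rle_mult_weaken _ C3); [| lra | apply Hlarge; trivial].
    apply Rplus_le_le_0_compat; apply Rmult_le_pos;
      try (apply pat7_nonneg; lra); apply Rlt_le, exp_pos.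
Qed.
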